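(* Let $d\ge 3$, $n\ge 2$, and let $F$ be an $n$-lattice framework in $\mathbb{R}^d$. Suppose that for every $1\le i\le d$ and every $0\le c\le n-1$, the subframework $F_{i,c}$ has a bar between every pair of its joints. Then $F$ is infinitesimally rigid.
   Context: A framework in $\mathbb{R}^d$ is a finite graph whose vertices (joints) are distinct points of $\mathbb{R}^d$ and whose edges (bars) are segments between pairs of joints. An infinitesimal motion of $\mathbb{R}^d$ is a map $f:\mathbb{R}^d\to\mathbb{R}^d$ with $(f(x)-f(y))\cdot(x-y)=0$ for all $x,y$. For a framework $F$ with joint set $X$, an infinitesimal motion of $F$ is a map $g:X\to\mathbb{R}^d$ with $(g(x)-g(y))\cdot(x-y)=0$ for every bar $xy$; $F$ is infinitesimally rigid if every infinitesimal motion of $F$ is the restriction to $X$ of an infinitesimal motion of $\mathbb{R}^d$. An $n$-lattice framework in $\mathbb{R}^d$ is a framework whose joints are the points $(x_1,\ldots,x_d)$ with all $x_i\in\{0,1,\ldots,n-1\}$ (bars arbitrary). For such $F$, $F_{i,c}$ denotes the subframework induced by all joints whose $i$-th coordinate equals $c$ (all bars of $F$ between such joints). *)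

From HB Require Import structures.
From mathcomp Require Import all_boot all_order all_algebra.
From mathcomp Require Import reals.
Set Implicit Arguments. Unset Strict Implicit. Unset Printing Implicit Defensive.
Import Order.TTheory GRing.Theory Num.Theory.
Local Open Scope ring_scope.

Definition dotv (R : realType) (d : nat) (u v : 'rV[R]_d) : R :=
  \sum_(i < d) u ord0 i * v ord0 i.

(* Joints of an n-lattice framework in R^d: integer points with coordinates
   in {0,...,n-1}, indexed by finite functions 'I_d -> 'I_n. *)
Definition joint (d n : nat) := {ffun 'I_d -> 'I_n}.

Definition jpos (R : realType) (d n : nat) (x : joint d n) : 'rV[R]_d :=
  \row_(i < d) ((x i : nat)%:R).

Definition inf_motion_space (R : realType) (d : nat)
    (f : 'rV[R]_d -> 'rV[R]_d) : Prop :=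
  forall x y : 'rV[R]_d, dotv (f x - f y) (x - y) = 0.

(* An n-lattice framework is given by its bar relation E on the joints
   (a bar between x and y exists iff E x y || E y x).
   Infinitesimal motion of the framework: *)
Definition inf_motion_fw (R : realType) (d n : nat) (E : rel (joint d n))
    (g : joint d n -> 'rV[R]_d) : Prop :=
  forall x y : joint d n, E x y ->
    dotv (g x - g y) (jpos R x - jpos R y) = 0.

Definition inf_rigid (R : realType) (d n : nat) (E : rel (joint d n)) : Prop :=
  forall g : joint d n -> 'rV[R]_d, inf_motion_fw E g ->
    exists f : 'rV[R]_d -> 'rV[R]_d,
      inf_motion_space f /\ forall x : joint d n, g x = f (jpos R x).

Definition slice_complete (d n : nat) (E : rel (joint d n)) (i : 'I_d) (c : 'I_n) : Prop :=
  forall x y : joint d n, x i = c -> y i = c -> x != y -> E x y || E y x.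

From HB Require Import structures.
From mathcomp Require Import all_boot all_order all_algebra.
From mathcomp Require Import reals.
From mathcomp Require Import zify lra.
Set Implicit Arguments. Unset Strict Implicit. Unset Printing Implicit Defensive.
Import Order.TTheory GRing.Theory Num.Theory.
Local Open Scope ring_scope.

(* Any two joints sharing a coordinate are joined by a bar.  The values of a
   motion g at the origin and at the unit joints e_k define an affine map
   p |-> g 0 + p A; the bars 0-e_k and e_k-e_l make A skew-symmetric, so this
   map is an infinitesimal motion of space, and the residual h of g against it
   vanishes at 0 and at every e_k.  If t and t' differ by e_m, h vanishes at
   both, and x shares a coordinate with each, then subtracting the bar
   equations of x-t and x-t' gives h(x)_m = 0.  This kills every component of
   h at a joint with a zero coordinate except that coordinate, which a
   triangle of three bars disposes of (here d >= 3 is used); a last use of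
   the same trick makes h vanish everywhere. *)

Lemma exists_ord_neq2 (d : nat) (k l : 'I_d) : (2 < d)%N ->
  exists m : 'I_d, m != k /\ m != l.
Proof.
move=> d_gt2; have := cardsC [set k; l]; rewrite cards2 card_ord => card_d.
have /card_gt0P [m] : (0 < #|~: [set k; l]|)%N by case: (k != l) card_d => /=; lia.
by rewrite in_setC in_set2 negb_or => /andP [mk ml]; exists m.
Qed.

Section Dot.
Variables (R : realType) (d : nat).
Implicit Types u v w : 'rV[R]_d.

Lemma dotvC u v : dotv u v = dotv v u.
Proof. by apply: eq_bigr => i _; rewrite mulrC. Qed.

Lemma dotvBl u v w : dotv (u - v) w = dotv u w - dotv v w.
Proof. by rewrite /dotv -sumrB; apply: eq_bigr => i _; rewrite !mxE mulrBl. Qed.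

Lemma dotvBr u v w : dotv u (v - w) = dotv u v - dotv u w.
Proof. by rewrite !(dotvC u) dotvBl. Qed.

Lemma dotvNN u v : dotv (- u) (- v) = dotv u v.
Proof. by apply: eq_bigr => i _; rewrite !mxE mulrNN. Qed.

Lemma dotv_single u v m : (forall i, i != m -> u ord0 i = 0) ->
  dotv u v = u ord0 m * v ord0 m.
Proof. by move=> u0; rewrite /dotv (bigD1 m) //= big1 ?addr0 // => i /u0 ->; rewrite mul0r. Qed.

Lemma dotv_delta u m : dotv u (delta_mx ord0 m) = u ord0 m.
Proof.
rewrite dotvC (dotv_single _ (m := m)) => [|i im]; first by rewrite mxE !eqxx mul1r.
by rewrite mxE (negbTE im) andbF.
Qed.

Lemma dotv_mul_trmx u v : dotv u v = (u *m v^T) ord0 ord0.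
Proof. by rewrite mxE; apply: eq_bigr => i _; rewrite mxE. Qed.

Lemma skew_affine_motion (b : 'rV[R]_d) (A : 'M[R]_d) : A^T = - A ->
  inf_motion_space (fun p => b + p *m A).
Proof.
move=> skewA p q; rewrite opprD addrACA subrr add0r -mulmxBl.
set w := p - q; rewrite dotv_mul_trmx.
have : (w *m A *m w^T) ord0 ord0 = (w *m A^T *m w^T) ord0 ord0.
  transitivity ((w *m A *m w^T)^T ord0 ord0); first by rewrite [RHS]mxE.
  by rewrite !trmx_mul trmxK mulmxA.
rewrite skewA mulmxN mulNmx [in X in _ = X -> _]mxE; lra.
Qed.

End Dot.

Section Lattice.
Variables (R : realType) (d n : nat).
Implicit Types (x y s : joint d n) (g h : joint d n -> 'rV[R]_d).

Definition shared_coord x y := exists i, x i = y i.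

Definition coord_motion g :=
  forall x y, shared_coord x y -> dotv (g x - g y) (jpos R x - jpos R y) = 0.

Lemma coord_motion_of_slices E g : (forall i c, slice_complete E i c) ->
  inf_motion_fw E g -> coord_motion g.
Proof.
move=> slices g_mot x y [i xy]; have [<-|nxy] := eqVneq x y.
  by rewrite dotvBl subrr.
have /orP [Exy|Eyx] := slices i (x i) x y erefl (esym xy) nxy; first exact: g_mot.
by rewrite -dotvNN !opprB; apply: g_mot.
Qed.

Lemma coord_motionB g (f : 'rV[R]_d -> 'rV[R]_d) : coord_motion g ->
  inf_motion_space f -> coord_motion (fun x => g x - f (jpos R x)).
Proof.
move=> g_mot f_mot x y xy.
by rewrite opprD addrACA -opprD dotvBl g_mot // f_mot subr0.
Qed.

Lemma coord_motion_single h x y m m' : coord_motion h -> shared_coord x y ->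
  (forall i, i != m -> h x ord0 i = 0) -> (forall i, i != m' -> h y ord0 i = 0) ->
  h x ord0 m * (jpos R x - jpos R y) ord0 m = h y ord0 m' * (jpos R x - jpos R y) ord0 m'.
Proof.
move=> h_mot xy hx hy; apply/eqP; rewrite -subr_eq0.
by rewrite -(dotv_single _ hx) -(dotv_single _ hy) -dotvBl h_mot.
Qed.

Definition set_coord x i (c : 'I_n) : joint d n := [ffun j => if j == i then c else x j].

Lemma set_coordE x i c j : set_coord x i c j = if j == i then c else x j.
Proof. by rewrite ffunE. Qed.

End Lattice.

Lemma set_coord_id (d n : nat) (x : joint d n) i c : x i = c -> set_coord x i c = x.
Proof. by move=> <-; apply/ffunP => j; rewrite set_coordE; case: eqVneq => [->|]. Qed.

Section UnitJoints.
Variables (R : realType) (d n : nat).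
Hypothesis d_gt2 : (2 < d)%N.
Implicit Types (x y s : joint d n.+2) (i j k l m : 'I_d).

Definition ord_one : 'I_n.+2 := Ordinal (isT : (1 < n.+2)%N).

Definition origin : joint d n.+2 := [ffun => ord0].

Definition unit_joint k : joint d n.+2 := set_coord origin k ord_one.

Lemma jpos_origin : jpos R origin = 0.
Proof. by apply/rowP => i; rewrite !mxE ffunE. Qed.

Lemma jpos_unit_joint k : jpos R (unit_joint k) = delta_mx ord0 k :> 'rV[R]_d.
Proof.
by apply/rowP => i; rewrite !mxE set_coordE ffunE eq_sym; case: eqVneq.
Qed.

Lemma jpos_set_coord_unitB s m :
  jpos R (set_coord s m ord_one) - jpos R (set_coord s m ord0) = delta_mx ord0 m :> 'rV[R]_d.
Proof.
apply/rowP => i; rewrite !mxE !set_coordE eq_sym.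
by case: eqVneq => _ /=; rewrite ?subr0 ?subrr.
Qed.

Section Residual.
Variable h : joint d n.+2 -> 'rV[R]_d.
Hypothesis h_mot : coord_motion h.

Lemma coord_motion_component_eq0 x s m :
  h (set_coord s m ord_one) = 0 -> h (set_coord s m ord0) = 0 ->
  shared_coord x (set_coord s m ord_one) -> shared_coord x (set_coord s m ord0) ->
  h x ord0 m = 0.
Proof.
move=> h1 h0 /h_mot bar1 /h_mot bar0; rewrite h1 subr0 in bar1; rewrite h0 subr0 in bar0.
rewrite -dotv_delta -(jpos_set_coord_unitB s).
set p1 := jpos R (set_coord s m _) in bar1 *; set p0 := jpos R (set_coord s m _) in bar0 *.
have -> : p1 - p0 = (jpos R x - p0) - (jpos R x - p1) by rewrite opprB [RHS]addrC subrKA.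
by rewrite dotvBr bar0 bar1 subrr.
Qed.

Hypothesis h_origin : h origin = 0.
Hypothesis h_unit : forall k, h (unit_joint k) = 0.

Lemma coord_motion_off_zero_coord y j m : y j = ord0 -> m != j -> h y ord0 m = 0.
Proof.
move=> yj mj; apply: (coord_motion_component_eq0 (s := origin)) => //.
- exact: h_unit.
- by rewrite set_coord_id ?ffunE.
- by exists j; rewrite set_coordE eq_sym (negbTE mj) ffunE.
- by exists j; rewrite set_coordE ffunE if_same.
Qed.

Lemma coord_motion_zero_coord y j : y j = ord0 -> h y = 0.
Proof.
move=> yj; apply/rowP => m; rewrite mxE.
have [->|mj] := eqVneq m j; last exact: coord_motion_off_zero_coord yj mj.
have hy l : l != j -> h y ord0 l = 0 by apply: coord_motion_off_zero_coord.
have [i [ij _]] := exists_ord_neq2 j j d_gt2.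
have [k [kj ki]] := exists_ord_neq2 j i d_gt2.
pose y' c := set_coord (set_coord y j ord_one) c ord0.
have y'E c l : y' c l = if l == c then ord0 else if l == j then ord_one else y l.
  by rewrite !set_coordE.
have hy' c l : l != c -> h (y' c) ord0 l = 0.
  by apply: coord_motion_off_zero_coord; rewrite y'E eqxx.
have [ik jk ji] : [/\ i != k, j != k & j != i] by rewrite !(eq_sym j) eq_sym.
have sh1 : shared_coord y (y' k) by exists i; rewrite y'E (negbTE ik) (negbTE ij).
have sh2 : shared_coord y (y' i) by exists k; rewrite y'E (negbTE ki) (negbTE kj).
have sh3 : shared_coord (y' k) (y' i) by exists j; rewrite !y'E (negbTE jk) (negbTE ji).
(* With a = h y j, b = h (y' k) k, c = h (y' i) i, the three bars read
   a = - b y_k, a = - c y_i and b y_k = - c y_i, whence a = 0. *)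
move: (coord_motion_single h_mot sh1 hy (hy' k)) (coord_motion_single h_mot sh2 hy (hy' i)).
move: (coord_motion_single h_mot sh3 (hy' k) (hy' i)).
rewrite !mxE !y'E !eqxx (negbTE jk) (negbTE ji) (negbTE ki) (negbTE ik) (negbTE kj) (negbTE ij) yj /=.
lra.
Qed.

Lemma coord_motion_eq0 x : h x = 0.
Proof.
apply/rowP => m; rewrite mxE.
have [i [im _]] := exists_ord_neq2 m m d_gt2.
have [l [lm li]] := exists_ord_neq2 m i d_gt2.
pose s := set_coord origin i (x i).
have sE c k : set_coord s m c k = if k == m then c else if k == i then x i else ord0.
  by rewrite !set_coordE ffunE.
apply: (coord_motion_component_eq0 (s := s)).
- by apply: (coord_motion_zero_coord (j := l)); rewrite sE (negbTE lm) (negbTE li).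
- by apply: (coord_motion_zero_coord (j := l)); rewrite sE (negbTE lm) (negbTE li).
- by exists i; rewrite sE (negbTE im) eqxx.
- by exists i; rewrite sE (negbTE im) eqxx.
Qed.

End Residual.

Section AffineExtension.
Variable g : joint d n.+2 -> 'rV[R]_d.
Hypothesis g_mot : coord_motion g.

Definition motion_vector k := g (unit_joint k) - g origin.

Definition motion_matrix : 'M[R]_d := \matrix_(k < d) motion_vector k.

Lemma motion_matrixE k l : motion_matrix k l = motion_vector k ord0 l.
Proof. by rewrite mxE. Qed.

Definition affine_extension p := g origin + p *m motion_matrix.

Lemma motion_matrix_skew : motion_matrix^T = - motion_matrix.
Proof.
have diag k : motion_vector k ord0 k = 0.
  have [s [sk _]] := exists_ord_neq2 k k d_gt2.
  have sh : shared_coord (unit_joint k) origin by exists s; rewrite set_coordE (negbTE sk).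
  by move: (g_mot sh); rewrite jpos_unit_joint jpos_origin subr0 dotv_delta.
apply/matrixP => k l; rewrite mxE [RHS]mxE !motion_matrixE.
have [<-|kl] := eqVneq k l; first by rewrite diag oppr0.
have [s [sk sl]] := exists_ord_neq2 k l d_gt2.
have sh : shared_coord (unit_joint k) (unit_joint l).
  by exists s; rewrite !set_coordE (negbTE sk) (negbTE sl).
move: (g_mot sh); rewrite !jpos_unit_joint.
have -> : g (unit_joint k) - g (unit_joint l) = motion_vector k - motion_vector l.
  by rewrite opprB addrA subrK.
rewrite dotvBr 2!dotvBl !dotv_delta !diag; lra.
Qed.

Lemma affine_extension_motion : inf_motion_space affine_extension.
Proof. exact: skew_affine_motion motion_matrix_skew. Qed.

Lemma coord_motion_affine x : g x = affine_extension (jpos R x).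
Proof.
pose h x := g x - affine_extension (jpos R x).
have h_mot : coord_motion h := coord_motionB g_mot affine_extension_motion.
have h_origin : h origin = 0.
  by rewrite /h jpos_origin /affine_extension mul0mx addr0 subrr.
have h_unit k : h (unit_joint k) = 0.
  by rewrite /h jpos_unit_joint /affine_extension -rowE rowK subrKC subrr.
by apply/subr0_eq; exact: (coord_motion_eq0 h_mot h_origin h_unit).
Qed.

End AffineExtension.
End UnitJoints.

Theorem theorem6 (R : realType) (d n : nat) (E : rel (joint d n)) :
  (3 <= d)%N -> (2 <= n)%N ->
  (forall (i : 'I_d) (c : 'I_n), slice_complete E i c) ->
  inf_rigid R E.
Proof.
case: n E => [|[|n]] E d_gt2 _ slices // g g_mot.
have g_coord := coord_motion_of_slices slices g_mot.
exists (affine_extension g); split; first exact: affine_extension_motion.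
exact: coord_motion_affine.
Qed.
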